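(* Consider an ESP instance with integer weights and let $L^*$ be the minimum total latency of a feasible expanding search pattern. Fix $\varepsilon>0$, let $W=\sum_{v\in V}w_v$ and $\omega=\lceil \log W/\log(1+\varepsilon)\rceil$. For each $i\in\{0,\dots,\omega\}$ let $T_i$ be the tree obtained by applying a polynomial-time $5/2$-approximation algorithm for the quota version of the prize-collecting Steiner tree problem with quota $q_i=W-W(1+\varepsilon)^{-i}$, so that $T_i$ contains $r$, has total vertex weight at least $q_i$, and has length $\ell(T_i)=\sum_{e\in E(T_i)}\ell_e$ at most $5/2$ times the minimum length of such a tree; here $T_0=(\{r\},\emptyset)$. Let $H$ be the directed graph with vertex set $\{0,\dots,\omega\}$, arcs $(i,j)$ for all $i<j$, and arc costs $c_{i,j}=W(1+\varepsilon)^{-i}\ell(T_j)$. Then a shortest $(0,\omega)$-path in $H$ has cost at most $\frac52(1+\varepsilon)eL^*$.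
   Context: ESP: connected undirected graph $G=(V,E)$, root $r$, edge lengths $\ell_e\in\mathbb{Z}_{\ge0}$, vertex weights $w_v\in\mathbb{Z}_{\ge0}$, $V^*=\{v:w_v>0\}$. An expanding search pattern is a sequence $\sigma=(e_1,\dots,e_m)$ of edges with $r\in e_1$ such that $\{e_1,\dots,e_i\}$ is a tree for every $i$; it is feasible if it visits all of $V^*$. For $v\in V^*\setminus\{r\}$, $k_v=\min\{i:v\in e_i\}$, $k_r=0$, latency $L_v(\sigma)=\sum_{i\le k_v}\ell_{e_i}$, total latency $L(\sigma)=\sum_{v\in V^*}w_vL_v(\sigma)$. The cost of a path in $H$ is the sum of its arc costs. *)

From HB Require Import structures.
From mathcomp Require Import all_boot all_order all_algebra.
From mathcomp Require Import reals sequences exp.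
Set Implicit Arguments. Unset Strict Implicit. Unset Printing Implicit Defensive.
Import Order.TTheory GRing.Theory Num.Theory.

Section Graphs.
Variables (V E : finType) (ends : E -> V * V).

Definition incident (v : V) (e : E) : bool :=
  (v == (ends e).1) || (v == (ends e).2).

Definition adj (F : {set E}) : rel V := fun x y =>
  [exists e in F, (((ends e).1 == x) && ((ends e).2 == y))
               || (((ends e).1 == y) && ((ends e).2 == x))].

Definition graph_connected : Prop := forall x y : V, connect (adj setT) x y.

Definition vset (F : {set E}) : {set V} := [set v | [exists e in F, incident v e]].

(* (U, F) is a tree: nonempty vertex set, edges inside U, connected,
   and acyclic (every edge is a bridge, i.e. minimally connected). *)
Definition is_tree (U : {set V}) (F : {set E}) : Prop :=
  [/\ U != set0,
      (forall e, e \in F -> (ends e).1 \in U /\ (ends e).2 \in U),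
      (forall x y, x \in U -> y \in U -> connect (adj F) x y) &
      (forall e, e \in F -> ~~ connect (adj (F :\ e)) (ends e).1 (ends e).2)].

Definition edge_tree (F : {set E}) : Prop := is_tree (vset F) F.

Definition expanding_pattern (r : V) (s : seq E) : Prop :=
  (match s with [::] => True | e :: _ => incident r e end) /\
  (forall i, 0 < i <= size s -> edge_tree [set e in take i s]).

Definition feasible (w : V -> nat) (r : V) (s : seq E) : Prop :=
  forall v, 0 < w v -> (v == r) || has (incident v) s.

(* latency of v: total length of e_1..e_{k_v}, k_v the first index with
   v in e_{k_v} (1-based), and k_r = 0 *)
Definition latency (len : E -> nat) (r : V) (s : seq E) (v : V) : nat :=
  if v == r then 0 else \sum_(e <- take (find (incident v) s).+1 s) len e.

Definition total_latency (len : E -> nat) (w : V -> nat) (r : V) (s : seq E) : nat :=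
  \sum_(v | 0 < w v) w v * latency len r s v.

Definition wset (w : V -> nat) (U : {set V}) : nat := \sum_(v in U) w v.
Definition lenset (len : E -> nat) (F : {set E}) : nat := \sum_(e in F) len e.

End Graphs.

Fixpoint path_cost (R : Type) (add : R -> R -> R) (zero : R)
    (c : nat -> nat -> R) (i : nat) (p : seq nat) : R :=
  match p with
  | [::] => zero
  | j :: p' => add (c i j) (path_cost add zero c j p')
  end.

From HB Require Import structures.
From mathcomp Require Import all_boot all_order all_algebra.
From mathcomp Require Import reals sequences exp.
From mathcomp Require Import ring lra zify.

Set Implicit Arguments.
Unset Strict Implicit.
Unset Printing Implicit Defensive.
Import Order.TTheory GRing.Theory Num.Theory.

(* Fix a feasible pattern of latency L* and let t_j be the first time at which
   it has visited weight at least q_j.  Its prefix of length t_j is a tree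
   through r of weight at least q_j, so l(T_j) <= 5/2 t_j; and as weight more
   than W (1+eps)^-(j+1) is still unvisited during [t_j, t_{j+1}),
   L* >= sum_j (t_{j+1} - t_j) W (1+eps)^-(j+1).
   With rho = 1 + eps and gamma = rho^K, the path of H through every K-th index
   (shifted by an offset b) charges each increment t_{j+1} - t_j at most
   gamma/(gamma-1) W rho^-(j+1) rho^D, where D in [1, K] is the distance from
   j + 1 back to the last visited index.  Averaging over the K offsets replaces
   rho^D by rho (gamma - 1) / (K eps), and choosing K with gamma <= e eps K
   gives the factor (1 + eps) e. *)

Definition covered_weight {V : finType} (w lat : V -> nat) (tau : nat) : nat :=
  \sum_(v | lat v <= tau) w v.

Lemma leq_sum_sub_support (T : finType) (w : T -> nat) (P : pred T) (A : {set T}) :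
  (forall v, P v -> 0 < w v -> v \in A) ->
  \sum_(v | P v) w v <= \sum_(v in A) w v.
Proof.
move=> supp; rewrite [X in X <= _]big_mkcond [X in _ <= X]big_mkcond /=.
apply: leq_sum => v _; case: ifP => // Pv.
by case: (posnP (w v)) => [->//|/(supp v Pv) ->].
Qed.

Section PatternPrefix.
Variables (V E : finType) (ends : E -> V * V) (len : E -> nat).

Lemma is_tree_set1 (r : V) : is_tree ends [set r] set0.
Proof.
split=> [|e|x y|e]; rewrite ?inE //.
  by apply/set0Pn; exists r; rewrite inE.
by move=> /eqP -> /eqP ->.
Qed.

Lemma mem_vset_seq (l : seq E) v :
  (v \in vset ends [set e in l]) = has (incident ends v) l.
Proof.
rewrite inE; apply/existsP/hasP=> [[e /andP[el ve]]|[e el ve]]; exists e => //.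
  by rewrite inE in el.
by rewrite inE el.
Qed.

Lemma lenset_le_sum (l : seq E) : lenset len [set e in l] <= \sum_(e <- l) len e.
Proof.
elim: l => [|e l IHl]; first by rewrite /lenset big_pred0 // => e; rewrite inE.
have -> : [set x in e :: l] = e |: [set x in l] by apply/setP => x; rewrite !inE.
rewrite /lenset big_cons; case: (boolP (e \in [set x in l])) => el.
  by rewrite (setUidPr _) ?sub1set // (leq_trans IHl) ?leq_addl.
by rewrite big_setU1 //= leq_add2l.
Qed.

Variables (w : V -> nat) (r : V) (s : seq E).
Hypotheses (s_pattern : expanding_pattern ends r s)
           (s_feasible : feasible ends w r s).

Lemma pattern_prefix_tree k : k <= size s ->
  is_tree ends (r |: vset ends [set e in take k s]) [set e in take k s].
Proof.
case: s_pattern => s_head s_trees ks; case: (posnP k) => [->|k_gt0].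
  have -> : [set e in take 0 s] = set0 by apply/setP => e; rewrite take0 !inE.
  have -> : vset ends set0 = set0.
    by apply/setP => v; rewrite !inE; apply/existsP => -[e]; rewrite inE.
  by rewrite setU0; apply: is_tree_set1.
have r_in : r \in vset ends [set e in take k s].
  case: s s_head ks {s_trees} => [|e s'] /= e_r ks; first lia.
  by rewrite mem_vset_seq -(prednK k_gt0) /= e_r.
by rewrite (setUidPr _) ?sub1set //; apply: s_trees; rewrite k_gt0.
Qed.

Lemma pattern_budget_tree tau : exists U' F',
  [/\ is_tree ends U' F', r \in U', lenset len F' <= tau &
      covered_weight w (latency ends len r s) tau <= wset w U'].
Proof.
pose plen k := \sum_(e <- take k s) len e.
have plen0 : exists k, (k <= size s) && (plen k <= tau).
  by exists 0; rewrite /plen take0 big_nil.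
have plen_ub k : (k <= size s) && (plen k <= tau) -> k <= size s by case/andP.
have [k /andP[ks plen_k] k_max] := ex_maxnP plen0 plen_ub.
exists (r |: vset ends [set e in take k s]), [set e in take k s]; split.
- exact: pattern_prefix_tree.
- exact: setU11.
- exact: leq_trans (lenset_le_sum _) plen_k.
apply: leq_sum_sub_support => v lat_v w_v.
have [->|v_r] := eqVneq v r; first exact: setU11.
have v_s : has (incident ends v) s by have := s_feasible w_v; rewrite (negbTE v_r).
rewrite /latency (negbTE v_r) -/(plen _) in lat_v.
by rewrite setU1r // mem_vset_seq has_take // k_max // -has_find v_s.
Qed.

Lemma total_latencyE :
  total_latency ends len w r s = \sum_v w v * latency ends len r s v.
Proof.
by rewrite /total_latency big_mkcond; apply: eq_bigr => v _; case: posnP => [->|].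
Qed.
End PatternPrefix.

Lemma sum_increments_below (t : nat -> nat) (L n : nat) :
  (forall j, t j <= t j.+1) ->
  \sum_(j < n | t j.+1 <= L) (t j.+1 - t j) <= L.
Proof.
move=> t_mono; suff : \sum_(j < n | t j.+1 <= L) (t j.+1 - t j) <= minn L (t n).
  by move/leq_trans; apply; rewrite geq_minl.
elim: n => [|n IHn]; first by rewrite big_ord0.
rewrite big_mkcond big_ord_recr /= -big_mkcond.
apply: leq_trans (leq_add IHn (leqnn _)) _; have := t_mono n; case: ifP => ? ?; lia.
Qed.

Lemma sum_tail_weight_le (V : finType) (w lat : V -> nat) (t : nat -> nat) n :
  (forall j, t j <= t j.+1) ->
  \sum_(j < n) (t j.+1 - t j) * \sum_(v | t j.+1 <= lat v) w v
    <= \sum_v w v * lat v.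
Proof.
move=> t_mono; rewrite (eq_bigr (fun j : 'I_n =>
  \sum_v if t j.+1 <= lat v then (t j.+1 - t j) * w v else 0)); last first.
  by move=> j _; rewrite big_distrr big_mkcond.
rewrite exchange_big /=; apply: leq_sum => v _.
by rewrite -big_mkcond -big_distrl /= mulnC leq_mul2l sum_increments_below ?orbT.
Qed.

Local Open Scope ring_scope.

Section Quantiles.
Variables (R : realType) (V : finType) (w lat : V -> nat) (q : nat -> R).
Local Notation W := (\sum_v w v)%N.
Local Notation G := (covered_weight w lat).

Lemma exists_quantile : (forall j, q j <= W%:R) ->
  exists t : nat -> nat, (forall j, q j <= (G (t j))%:R) /\
                         (forall j tau, q j <= (G tau)%:R -> (t j <= tau)%N).
Proof.
move=> q_le_W.
have q_covered j : exists tau, q j <= (G tau)%:R.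
  exists (\max_v lat v); rewrite /covered_weight (eq_bigl xpredT) => // v.
  exact: leq_bigmax.
exists (fun j => ex_minn (q_covered j)).
by split=> [j|j tau]; case: ex_minnP => // tj _; apply.
Qed.

Variable t : nat -> nat.
Hypotheses (t_cover : forall j, q j <= (G (t j))%:R)
           (t_min : forall j tau, q j <= (G tau)%:R -> (t j <= tau)%N).
Hypotheses (q0_le0 : q 0 <= 0) (q_mono : forall j, q j <= q j.+1).

Lemma quantile0 : t 0 = 0%N.
Proof. by apply/eqP; rewrite -leqn0 t_min // (le_trans q0_le0). Qed.

Lemma quantile_mono j : (t j <= t j.+1)%N.
Proof. exact/t_min/(le_trans (q_mono j)). Qed.

Lemma tail_weight_gt j : (0 < t j)%N ->
  W%:R - q j < (\sum_(v | (t j <= lat v)%N) w v)%:R.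
Proof.
move=> tj_gt0; have G_lt : (G (t j).-1)%:R < q j.
  by rewrite ltNge; apply/negP => /t_min; lia.
have -> : W = (G (t j).-1 + \sum_(v | t j <= lat v) w v)%N.
  rewrite (bigID (fun v => (lat v <= (t j).-1)%N)) /=; congr (_ + _).
  by apply: eq_bigl => v; rewrite -ltnNge -ltnS prednK.
rewrite natrD; lra.
Qed.

Lemma latency_lower_bound n :
  \sum_(j < n) ((t j.+1)%:R - (t j)%:R) * (W%:R - q j.+1)
    <= (\sum_v w v * lat v)%N%:R.
Proof.
apply: le_trans (_ : _ <= (\sum_(j < n) (t j.+1 - t j) *
                               \sum_(v | t j.+1 <= lat v) w v)%N%:R) _; last first.
  by rewrite ler_nat sum_tail_weight_le //; apply: quantile_mono.
rewrite [leRHS]natr_sum; apply: ler_sum => j _; rewrite natrM natrB ?quantile_mono //.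
have [tj0|tj_gt0] := posnP (t j.+1).
  have := quantile_mono j; rewrite tj0 leqn0 => /eqP ->.
  by rewrite subrr !mul0r.
by rewrite ler_wpM2l ?subr_ge0 ?ler_nat ?quantile_mono // ltW // tail_weight_gt.
Qed.
End Quantiles.

Lemma pattern_quantiles (R : realType) (V E : finType) (ends : E -> V * V)
    (len : E -> nat) (w : V -> nat) (r : V) (s : seq E) (q : nat -> R) :
  expanding_pattern ends r s -> feasible ends w r s ->
  q 0 <= 0 -> (forall j, q j <= q j.+1) -> (forall j, q j <= (\sum_v w v)%N%:R) ->
  exists t : nat -> nat,
    [/\ t 0 = 0%N, forall j, (t j <= t j.+1)%N,
        forall j, exists U' F', [/\ is_tree ends U' F', r \in U',
                                  (lenset len F' <= t j)%N & q j <= (wset w U')%:R] &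
        forall n, \sum_(j < n) ((t j.+1)%:R - (t j)%:R) *
                              ((\sum_v w v)%N%:R - q j.+1)
                    <= (total_latency ends len w r s)%:R].
Proof.
move=> s_pattern s_feasible q0 q_mono q_le_W.
have [t [t_cover t_min]] := exists_quantile (latency ends len r s) q_le_W.
exists t; split.
- exact: quantile0 t_min q0.
- exact: quantile_mono t_cover t_min q_mono.
- move=> j; have [U' [F' [U'_tree r_U' F'_len U'_w]]] :=
    pattern_budget_tree len s_pattern s_feasible (t j).
  by exists U', F'; split=> //; apply: le_trans (t_cover j) _; rewrite ler_nat.
- by move=> n; rewrite total_latencyE; apply: latency_lower_bound.
Qed.

Lemma mem_path_ltn_le_last i p j : path ltn i p -> j \in p -> (j <= last i p)%N.
Proof.
elim: p i => [|k p IHp] i //= /andP[_ kp].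
rewrite inE => /orP[/eqP->|jp]; last exact: IHp.
have := mem_last k p; rewrite inE => /orP[/eqP->//|].
by move/(allP (order_path_min ltn_trans kp))/ltnW.
Qed.

Lemma path_cost_rcons (R : nmodType) (c : nat -> nat -> R) i p n :
  path_cost +%R 0 c i (rcons p n) = path_cost +%R 0 c i p + c (last i p) n.
Proof. by elim: p i => [|j p IHp] i /=; rewrite ?addr0 ?add0r // IHp addrA. Qed.

Lemma ler_path_cost (R : numDomainType) (c c' : nat -> nat -> R) i p :
  (forall i j, j \in p -> c i j <= c' i j) ->
  path_cost +%R 0 c i p <= path_cost +%R 0 c' i p.
Proof.
elim: p i => [|j p IHp] i le_c //=; rewrite lerD ?le_c ?mem_head // IHp //.
by move=> i' j' j'p; rewrite le_c // inE j'p orbT.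
Qed.

Lemma sum_rot_mod (R : nmodType) (K m : nat) (f : nat -> R) : (0 < K)%N ->
  \sum_(b < K) f ((b + m) %% K)%N = \sum_(b < K) f b.
Proof.
case: K => // K _; rewrite [RHS](reindex_inj (addIr (inZp m))) /=.
by apply: eq_bigr => b _; rewrite modnDmr.
Qed.

Lemma exists_le_mean (R : realDomainType) (n : nat) (f : 'I_n -> R) : (0 < n)%N ->
  exists i, n%:R * f i <= \sum_i f i.
Proof.
move=> n_gt0; case: (arg_minP f (P := predT) (i0 := Ordinal n_gt0) isT) => i _ min_i.
exists i; have : \sum_(j < n) f i <= \sum_j f j.
  by apply: ler_sum => j _; apply: min_i.
by rewrite sumr_const card_ord mulr_natl.
Qed.

Section PeriodicPaths.
Variables (R : realType) (rho : R) (K : nat) (a x : nat -> R).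
Hypotheses (rho_gt1 : 1 < rho) (K_gt0 : (0 < K)%N).
Hypotheses (a_ge0 : forall j, 0 <= a j) (a_succ : forall j, a j = a j.+1 * rho).
Hypotheses (x0 : x 0 = 0) (x_mono : forall j, x j <= x j.+1).

Local Notation gam := (rho ^+ K).
Local Notation g := (gam / (gam - 1)).
Local Notation cost := (path_cost +%R 0 (fun i j => a i * x j)).

(* The path with offset [b] visits [n] iff [phase b n = K]; after its first
   visit, [charge b n] is [a] at the last index visited before [n]. *)
Definition phase b n := ((b + n) %% K).+1.
Definition charge b n := a n * rho ^+ phase b n.
Definition slack b n := \sum_(j < n) (x j.+1 - x j) * (g * charge b j.+1).

Lemma x_ge0 n : 0 <= x n.
Proof. by elim: n => [|n IHn]; rewrite ?x0 // (le_trans IHn). Qed.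

Lemma gam_gt1 : 1 < gam.
Proof. by rewrite exprn_egt1 // -lt0n. Qed.

Lemma g_gam : g * gam = g + gam.
Proof. by field; rewrite subr_eq0 gt_eqF // gam_gt1. Qed.

Lemma g_ge1 : 1 <= g.
Proof. by rewrite ler_pdivlMr ?subr_gt0 ?gam_gt1 // mul1r gerBl. Qed.

Lemma phaseS b n : phase b n.+1 = if (phase b n < K)%N then (phase b n).+1 else 1%N.
Proof.
rewrite /phase addnS -[(b + n).+1]addn1 -modnDml addn1.
have := ltn_pmod (b + n) K_gt0.
case: (ltnP ((b + n) %% K).+1 K) => [lt _|ge lt]; first by rewrite modn_small.
have -> : ((b + n) %% K).+1 = K by apply/eqP; rewrite eqn_leq lt ge.
by rewrite modnn.
Qed.

Lemma phase_le b n : (phase b n <= K)%N.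
Proof. exact: ltn_pmod. Qed.

Lemma charge_succ b n : (phase b n < K)%N -> charge b n.+1 = charge b n.
Proof. by move=> lt; rewrite /charge phaseS lt exprS mulrA -a_succ. Qed.

Lemma charge_wrap b n :
  phase b n = K -> charge b n.+1 = a n /\ charge b n = a n * gam.
Proof. by move=> eqK; rewrite /charge phaseS eqK ltnn expr1 -a_succ. Qed.

(* [g * x n * charge b n] prepays the arc leaving the last visited index: that
   arc costs at most [gam * a n * x n], and [g * gam = g + gam] leaves exactly
   the prepayment for the next period. *)
Lemma periodic_path_invariant b n : exists p,
  [/\ path ltn 0 (rcons p n.+1), a (last 0 p) <= charge b n.+1 &
      cost 0 p + g * x n.+1 * charge b n.+1 <= slack b n.+1].
Proof.
elim: n => [|n [p [p_path p_last p_cost]]].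
  exists [::]; split=> //=.
    by rewrite a_succ /charge ler_wpM2l // -[X in X <= _]expr1 ler_weXn2l // ltW.
  by rewrite /slack big_ord1 x0; lra.
have slackS : slack b n.+2 = slack b n.+1 + (x n.+2 - x n.+1) * (g * charge b n.+2).
  by rewrite /slack big_ord_recr.
have x_ge0' := x_ge0 n.+1; have g1 := g_ge1.
have [lt|ge] := ltnP (phase b n.+1) K.
  have e := charge_succ lt; exists p; split; rewrite ?e //.
    by move: p_path; rewrite !rcons_path => /andP[-> /ltnW].
  rewrite slackS e; nra.
have eqK : phase b n.+1 = K by apply/eqP; rewrite eqn_leq phase_le.
have [e1 e2] := charge_wrap eqK.
exists (rcons p n.+1); split.
- by rewrite rcons_path p_path last_rcons /=.
- by rewrite last_rcons e1.
rewrite path_cost_rcons slackS e1; rewrite e2 in p_cost p_last.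
rewrite (_ : g * x n.+1 * (a n.+1 * gam) = (g * gam) * (a n.+1 * x n.+1)) in p_cost;
  last by ring.
rewrite g_gam in p_cost.
have := ler_wpM2r x_ge0' p_last; lra.
Qed.

Lemma sum_phase m : \sum_(b < K) rho ^+ phase b m = rho * (gam - 1) / (rho - 1).
Proof.
rewrite /phase (sum_rot_mod m (fun d => rho ^+ d.+1)) // subrX1.
under eq_bigr do rewrite exprS.
by rewrite -mulr_sumr; field; rewrite subr_eq0 gt_eqF.
Qed.

Lemma sum_slack n : \sum_(b < K) slack b n =
  rho * gam / (rho - 1) * \sum_(j < n) (x j.+1 - x j) * a j.+1.
Proof.
rewrite /slack exchange_big mulr_sumr; apply: eq_bigr => j _ /=.
rewrite (eq_bigr (fun b : 'I_K =>
  (x j.+1 - x j) * g * a j.+1 * rho ^+ phase b j.+1)) => [|b _].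
  rewrite -mulr_sumr sum_phase; field.
  by rewrite !subr_eq0 !gt_eqF ?gam_gt1.
by rewrite /charge; ring.
Qed.

Lemma periodic_path_bound N : exists p, [/\ path ltn 0 p, last 0 p = N &
  K%:R * cost 0 p <= rho * gam / (rho - 1) * \sum_(j < N) (x j.+1 - x j) * a j.+1].
Proof.
case: N => [|n]; first by exists [::]; rewrite big_ord0 mulr0 mulr0.
have [b le_mean] := exists_le_mean (fun b : 'I_K => slack b n.+1) K_gt0.
have [p [p_path p_last p_cost]] := periodic_path_invariant b n.
exists (rcons p n.+1); split; rewrite ?last_rcons // -sum_slack.
apply: le_trans le_mean; rewrite ler_wpM2l // path_cost_rcons.
apply: le_trans p_cost; rewrite lerD2l -mulrA.
have charge_ge0 : 0 <= charge b n.+1.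
  by rewrite mulr_ge0 ?exprn_ge0 // ltW // (lt_trans ltr01).
apply: le_trans (ler_wpM2r (x_ge0 _) p_last) _; rewrite [X in X <= _]mulrC.
by rewrite ler_peMl ?g_ge1 // mulr_ge0 ?x_ge0.
Qed.
End PeriodicPaths.

Lemma expR_div_le (R : realType) (y z : R) : 1 <= y -> y <= z ->
  expR y / y <= expR z / z.
Proof.
move=> y_ge1 yz; rewrite ler_pdivrMr ?(lt_le_trans ltr01) // mulrAC.
rewrite ler_pdivlMr ?(lt_le_trans ltr01 (le_trans y_ge1 yz)) //.
have -> : expR z = expR y * expR (z - y) by rewrite -expRD addrC subrK.
rewrite -mulrA ler_wpM2l ?expR_ge0 //.
have : 0 <= (y - 1) * (z - y) by rewrite mulr_ge0 ?subr_ge0.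
have := expR_ge1Dx (z - y).
nra.
Qed.

(* K = floor(1/x) + 1 with x = ln (1 + eps) gives 1 < K x <= 1 + x; as e^y / y
   increases on [1, +oo), e^(K x) <= e (1 + eps) K x / (1 + x) <= e eps K. *)
Lemma exists_period (R : realType) (eps : R) : 0 < eps ->
  exists K : nat, (0 < K)%N /\ (1 + eps) ^+ K <= expR 1 * eps * K%:R.
Proof.
move=> eps_gt0; pose x := ln (1 + eps).
have x_gt0 : 0 < x by apply: ln_gt0; lra.
have x_le : x <= eps by apply: le_ln1Dx; lra.
have exp_x : expR x = 1 + eps by rewrite lnK // posrE; lra.
have /andP[tr_le tr_gt] : (Num.truncn x^-1)%:R <= x^-1 < (Num.truncn x^-1).+1%:R.
  by rewrite truncn_itv // invr_ge0 ltW.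
exists (Num.truncn x^-1).+1; split => //; set K := (Num.truncn x^-1).+1 in tr_gt *.
have Kx_gt1 : 1 < K%:R * x.
  by rewrite -[X in X < _](mulVf (lt0r_neq0 x_gt0)) ltr_pM2r.
have Kx_le : K%:R * x <= 1 + x.
  rewrite /K -natr1 mulrDl mul1r lerD2r -[X in _ <= X](mulVf (lt0r_neq0 x_gt0)).
  by rewrite ler_pM2r.
have := expR_div_le (ltW Kx_gt1) Kx_le.
rewrite ler_pdivrMr ?(lt_trans ltr01) // expRD exp_x expRM_natl exp_x => le_KX.
apply: le_trans le_KX _; rewrite mulrAC ler_pdivrMr; last lra.
have : 0 <= expR 1 * K%:R * (eps - x) by rewrite !mulr_ge0 ?expR_ge0 ?subr_ge0.
lra.
Qed.

Lemma geometric_path_bound (R : realType) (eps : R) (a x : nat -> R) (N : nat) :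
  0 < eps -> (forall j, 0 <= a j) -> (forall j, a j = a j.+1 * (1 + eps)) ->
  x 0 = 0 -> (forall j, x j <= x j.+1) ->
  exists p, [/\ path ltn 0 p, last 0 p = N &
    path_cost +%R 0 (fun i j => a i * x j) 0 p
      <= (1 + eps) * expR 1 * \sum_(j < N) (x j.+1 - x j) * a j.+1].
Proof.
move=> eps_gt0 a_ge0 a_succ x0 x_mono.
have [K [K_gt0 period]] := exists_period eps_gt0.
have [|p [p_path p_last p_cost]] :=
  periodic_path_bound (rho := 1 + eps) _ K_gt0 a_ge0 a_succ x0 x_mono N; first lra.
exists p; split=> //; set X := \sum_(j < N) _ in p_cost *.
have X_ge0 : 0 <= X.
  by apply: sumr_ge0 => j _; rewrite mulr_ge0 ?subr_ge0.
rewrite -(ler_pM2l (_ : 0 < K%:R)) ?ltr0n //; apply: le_trans p_cost _.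
rewrite addrAC subrr add0r mulrAC ler_pdivrMr //.
have epsX_ge0 : 0 <= (1 + eps) * X by rewrite mulr_ge0 //; lra.
have := ler_wpM2l epsX_ge0 period; lra.
Qed.

Theorem lemma7 (R : realType) (V E : finType) (ends : E -> V * V)
    (len : E -> nat) (w : V -> nat) (r : V)
    (Gconn : graph_connected ends)
    (eps : R) (eps_gt0 : 0 < eps)
    (U : nat -> {set V}) (F : nat -> {set E}) :
  let W : nat := (\sum_(v : V) w v)%N in
  let omega : nat := `| Num.ceil (ln (W%:R : R) / ln (1 + eps)) |%N in
  let q (i : nat) : R := W%:R - W%:R * (1 + eps) ^- i in
  U 0%N = [set r] -> F 0%N = set0 ->
  (forall i, (i <= omega)%N ->
     [/\ is_tree ends (U i) (F i), r \in U i,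
         q i <= (wset w (U i))%:R &
         forall (U' : {set V}) (F' : {set E}),
           is_tree ends U' F' -> r \in U' -> q i <= (wset w U')%:R ->
           (lenset len (F i))%:R <= (5 / 2 : R) * (lenset len F')%:R]) ->
  let c (i j : nat) : R := W%:R * (1 + eps) ^- i * (lenset len (F j))%:R in
  forall (Lstar : nat),
    (exists s : seq E, [/\ expanding_pattern ends r s, feasible ends w r s &
                          total_latency ends len w r s = Lstar]) ->
    (forall s : seq E, expanding_pattern ends r s -> feasible ends w r s ->
       (Lstar <= total_latency ends len w r s)%N) ->
    exists p : seq nat,
      [/\ path ltn 0%N p, last 0%N p = omega &
          path_cost +%R 0 c 0%N p <= (5 / 2 : R) * (1 + eps) * expR 1 * Lstar%:R].
Proof.
move=> W omega q _ _ F_approx c Lstar [s [s_pattern s_feasible <-]] _.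
pose a j : R := W%:R * (1 + eps) ^- j.
have a_ge0 j : 0 <= a j by rewrite mulr_ge0 // invr_ge0 exprn_ge0 //; lra.
have a_succ j : a j = a j.+1 * (1 + eps).
  by rewrite /a exprSr invfM -!mulrA mulVf ?mulr1 //; lra.
have q_a j : q j = W%:R - a j by [].
have [|||t [t0 t_mono t_trees t_latency]] :=
  pattern_quantiles len (q := q) s_pattern s_feasible _ _ _.
- by rewrite /q expr0 invr1 mulr1 subrr.
- by move=> j; rewrite !q_a a_succ; have := a_ge0 j.+1; nra.
- by move=> j; rewrite q_a gerBl.
have tree_bound j :
    (j <= omega)%N -> (lenset len (F j))%:R <= (5 / 2 : R) * (t j)%:R.
  move=> j_le; have [_ _ _ F_min] := F_approx j j_le.
  have [U' [F' [U'_tree r_U' F'_len U'_w]]] := t_trees j.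
  apply: le_trans (F_min U' F' U'_tree r_U' U'_w) _.
  by rewrite ler_wpM2l ?ler_nat //; lra.
have [||p [p_path p_last p_cost]] :=
  geometric_path_bound (x := fun j => (5 / 2 : R) * (t j)%:R) omega
    eps_gt0 a_ge0 a_succ.
- by rewrite t0 mulr0.
- by move=> j; rewrite ler_wpM2l ?ler_nat ?t_mono //; lra.
exists p; split=> //; apply: le_trans (le_trans _ p_cost) _.
  apply: ler_path_cost => i j j_p; apply: ler_wpM2l; first exact: a_ge0.
  by rewrite tree_bound // -p_last mem_path_ltn_le_last.
rewrite (eq_bigr (fun j : 'I_omega =>
  5 / 2 * (((t j.+1)%:R - (t j)%:R) * (W%:R - q j.+1)))); last first.
  by move=> j _; rewrite q_a; ring.
rewrite -mulr_sumr.
have := t_latency omega; have : 0 <= (1 + eps) * expR 1.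
  by rewrite mulr_ge0 ?expR_ge0 //; lra.
nra.
Qed.
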